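(* Let $K$ be a totally ordered quasi-field of characteristic $1$, $a\in K$, $n\ge1$, let $\varphi:K[X]\to E=K+KX+\dots+KX^{n-1}$ be the $K$-linear map with $\varphi(X^m)=a^qX^r$ for $m=nq+r$, $0\le r<n$, and let $J$ be the ideal of $K[X]$ generated by the $X^{nk}+a^k$, $k\ge1$. If $P,Q\in K[X]$ satisfy $\varphi(P)=\varphi(Q)$, then $P\equiv Q \pmod J$.
   Context: A quasi-field of characteristic $1$ is a commutative semiring $K$ with $1+1=1$ in which every nonzero element is multiplicatively invertible; it is ordered by $u\le v$ iff $u+v=v$, totally ordered meaning the order is total. Congruence modulo an ideal $J$ of $K[X]$: $P\equiv Q\pmod J$ iff $(P+J)\cap(Q+J)\neq\emptyset$ and for all $U\in J$ and $V\in K[X]$: $PU+V\in J\iff QU+V\in J$. *)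

From HB Require Import structures.
From mathcomp Require Import all_boot all_order all_algebra.
Set Implicit Arguments. Unset Strict Implicit. Unset Printing Implicit Defensive.
Import GRing.Theory.
Local Open Scope ring_scope.

Definition quasi_field_char1 (K : comNzSemiRingType) : Prop :=
  (1 + 1 = 1 :> K) /\ (forall x : K, x != 0 -> exists y : K, x * y = 1).

Definition qle (K : comNzSemiRingType) (u v : K) : Prop := u + v = v.

Definition totally_ordered (K : comNzSemiRingType) : Prop :=
  forall u v : K, qle u v \/ qle v u.

Definition phi (K : comNzSemiRingType) (n : nat) (a : K) (P : {poly K}) : {poly K} :=
  \sum_(i < size P) (P`_i * a ^+ (i %/ n))%:P * 'X^(i %% n).

Definition inJ (K : comNzSemiRingType) (n : nat) (a : K) (P : {poly K}) : Prop :=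
  exists s : seq (nat * {poly K}),
    all (fun kc => 0 < kc.1)%N s /\
    P = \sum_(kc <- s) kc.2 * ('X^(n * kc.1) + (a ^+ kc.1)%:P).

Definition congr_mod (K : comNzSemiRingType) (J : {poly K} -> Prop)
    (P Q : {poly K}) : Prop :=
  (exists U V : {poly K}, J U /\ J V /\ P + U = Q + V) /\
  (forall U V : {poly K}, J U -> (J (P * U + V) <-> J (Q * U + V))).

From HB Require Import structures.
From mathcomp Require Import all_boot all_order all_algebra.
Set Implicit Arguments. Unset Strict Implicit. Unset Printing Implicit Defensive.
Import GRing.Theory.
Local Open Scope ring_scope.

(* Give the coefficient of X^i the weight  wcoef F i = F_i * a^(i div n);
   phi(F) collects the weights of F residue class by residue class mod n.
   Call F balanced when every nonzero weight of F is dominated, for the order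
   u <= v iff u + v = v, by the weight of F at another index of the same
   residue class. *)

Section IdempotentOrder.
Variable R : comNzSemiRingType.

Lemma qle_trans (y x z : R) : qle x y -> qle y z -> qle x z.
Proof. by rewrite /qle => xy yz; rewrite -yz addrA xy. Qed.

Lemma qle_anti (x y : R) : qle x y -> qle y x -> x = y.
Proof. by rewrite /qle => xy yx; rewrite -xy addrC. Qed.

Lemma qle0x (x : R) : qle 0 x.
Proof. exact: add0r. Qed.

Lemma qlex0 (x : R) : qle x 0 -> x = 0.
Proof. by rewrite /qle addr0. Qed.

Lemma qle_add (x y z w : R) : qle x y -> qle z w -> qle (x + z) (y + w).
Proof. by rewrite /qle => xy zw; rewrite addrACA xy zw. Qed.

Lemma qle_lub (x y z : R) : qle x z -> qle y z -> qle (x + y) z.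
Proof. by rewrite /qle => xz yz; rewrite -addrA yz xz. Qed.

Lemma qle_mulr (z x y : R) : qle x y -> qle (x * z) (y * z).
Proof. by rewrite /qle => xy; rewrite -mulrDl xy. Qed.

Lemma qle_mull (z x y : R) : qle x y -> qle (z * x) (z * y).
Proof. by rewrite /qle => xy; rewrite -mulrDr xy. Qed.

Hypothesis addrr : forall x : R, x + x = x.

Lemma qle_addr (x y : R) : qle x (x + y).
Proof. by rewrite /qle addrA addrr. Qed.

Lemma qle_addl (x y : R) : qle y (x + y).
Proof. by rewrite addrC; apply: qle_addr. Qed.

End IdempotentOrder.

Lemma residue_shift (n i j : nat) : (0 < n)%N -> (j < i)%N -> (j = i %[mod n])%N ->
  exists2 k, (0 < k)%N & i = (j + n * k)%N.
Proof.
move=> n_gt0 ji /eqP; rewrite eq_sym eqn_mod_dvd ?(ltnW ji) // => /divnK ij_eq.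
exists ((i - j) %/ n)%N; last by rewrite mulnC ij_eq subnKC // ltnW.
by rewrite -(ltn_pmul2r n_gt0) ij_eq mul0n subn_gt0.
Qed.

Section QuasiFieldPolynomials.
Variables (K : comNzSemiRingType) (a : K) (n : nat).
Hypothesis hK : quasi_field_char1 K.
Hypothesis hord : totally_ordered K.
Hypothesis hn : (0 < n)%N.

Lemma add_idem (x : K) : x + x = x.
Proof. by case: hK => h _; rewrite -[x]mulr1 -mulrDr h. Qed.

Lemma add_idem_poly (p : {poly K}) : p + p = p.
Proof. by apply/polyP => i; rewrite coefD add_idem. Qed.

Lemma qle_split (x y z : K) : qle x (y + z) -> qle x y \/ qle x z.
Proof.
move=> xyz; case: (hord y z) => yz; first by right; rewrite -yz.
by left; rewrite /qle addrC in yz; rewrite -yz.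
Qed.

Lemma qle_sum_split (I : Type) (r : seq I) (p : pred I) (F : I -> K) (x : K) :
  qle x (\sum_(i <- r | p i) F i) -> x = 0 \/ exists2 i, p i & qle x (F i).
Proof.
elim: r => [|i r IH]; first by rewrite big_nil => /qlex0; left.
rewrite big_cons; case: ifP => [pi /qle_split [xFi | /IH //] | _ /IH //].
by right; exists i.
Qed.

Lemma qle_neq0 (x y : K) : qle x y -> x != 0 -> y != 0.
Proof. by move=> xy; apply: contraNneq => y0; apply/eqP/qlex0; rewrite -y0. Qed.

Lemma qle_cancel (w x y : K) : w != 0 -> qle (x * w) (y * w) -> qle x y.
Proof.
case: hK => _ inv /inv [w' ww'] /(qle_mulr w').
by rewrite -!mulrA ww' !mulr1.
Qed.

Lemma coef_monomial (c : K) l m : (c%:P * 'X^l)`_m = if m == l then c else 0.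
Proof. by rewrite coefCM coefXn; case: eqP; rewrite ?mulr1 ?mulr0. Qed.

Lemma qle_monomial (F : {poly K}) c i : qle c F`_i -> qle (c%:P * 'X^i) F.
Proof.
move=> cF; apply/polyP => m; rewrite coefD coef_monomial.
by case: eqP => [->|_]; [exact: cF | rewrite add0r].
Qed.

Definition jgen (k : nat) : {poly K} := 'X^(n * k) + (a ^+ k)%:P.

Lemma binomial_expand (c : K) l k :
  c%:P * 'X^l * jgen k = c%:P * 'X^(l + n * k) + (c * a ^+ k)%:P * 'X^l.
Proof.
rewrite mulrDr -mulrA -exprD polyCM; congr (_ + _).
by rewrite -mulrA [_ * (a ^+ k)%:P]mulrC mulrA.
Qed.

Lemma inJ0 : inJ n a 0.
Proof. by exists [::]; rewrite big_nil. Qed.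

Lemma inJD (F G : {poly K}) : inJ n a F -> inJ n a G -> inJ n a (F + G).
Proof.
case=> s [s_pos ->] [t [t_pos ->]]; exists (s ++ t).
by rewrite all_cat s_pos t_pos big_cat.
Qed.

Lemma inJM (C F : {poly K}) : inJ n a F -> inJ n a (C * F).
Proof.
case=> s [s_pos ->]; exists [seq (kc.1, C * kc.2) | kc <- s]; split.
  by rewrite all_map; apply: sub_all s_pos => kc.
by rewrite big_map mulr_sumr; apply: eq_bigr => kc _; rewrite mulrA.
Qed.

Lemma inJ_gen (C : {poly K}) k : (0 < k)%N -> inJ n a (C * jgen k).
Proof. by move=> k_gt0; exists [:: (k, C)]; rewrite big_seq1 /= k_gt0. Qed.

(* The weight of the coefficient of X^i, i.e. its contribution to phi. *)
Definition wcoef (F : {poly K}) (i : nat) : K := F`_i * a ^+ (i %/ n).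

Lemma wcoefD (F G : {poly K}) i : wcoef (F + G) i = wcoef F i + wcoef G i.
Proof. by rewrite /wcoef coefD mulrDl. Qed.

Lemma wcoef_le_addl (F G : {poly K}) i : qle (wcoef F i) (wcoef (F + G) i).
Proof. by rewrite wcoefD; apply: qle_addr add_idem _ _. Qed.

Lemma wcoef_le_addr (F G : {poly K}) i : qle (wcoef G i) (wcoef (F + G) i).
Proof. by rewrite wcoefD; apply: qle_addl add_idem _ _. Qed.

Definition dominated (F : {poly K}) (x : K) (i : nat) : Prop :=
  exists j, [/\ j != i, j = i %[mod n] & qle x (wcoef F j)]%N.

(* Every nonzero weight of F is dominated within its residue class; this
   characterizes the elements of J. *)
Definition balanced (F : {poly K}) : Prop :=
  forall i, wcoef F i != 0 -> dominated F (wcoef F i) i.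

Lemma dominated_le (F : {poly K}) x y i :
  qle x y -> dominated F y i -> dominated F x i.
Proof. by move=> xy [j [ji jmod yF]]; exists j; split=> //; apply: qle_trans yF. Qed.

Lemma dominated_mono (F G : {poly K}) x i :
  (forall j, qle (wcoef F j) (wcoef G j)) -> dominated F x i -> dominated G x i.
Proof. by move=> FG [j [ji jmod xF]]; exists j; split=> //; apply: qle_trans xF (FG j). Qed.

Lemma balanced0 : balanced 0.
Proof. by move=> i; rewrite /wcoef coef0 mul0r eqxx. Qed.

(* The weight of F + G at i is the larger of the two weights. *)
Lemma balancedD (F G : {poly K}) : balanced F -> balanced G -> balanced (F + G).
Proof.
move=> bF bG i; rewrite wcoefD.
case: (hord (wcoef F i) (wcoef G i)) => [FG | GF]; rewrite ?FG; last rewrite addrC GF.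
- by move=> /bG; apply: dominated_mono => j; apply: wcoef_le_addr.
- by move=> /bF; apply: dominated_mono => j; apply: wcoef_le_addl.
Qed.

Lemma balanced_sum (I : Type) (r : seq I) (p : pred I) (F : I -> {poly K}) :
  (forall i, p i -> balanced (F i)) -> balanced (\sum_(i <- r | p i) F i).
Proof. by apply: (big_ind balanced); [exact: balanced0 | exact: balancedD]. Qed.

(* c X^l (X^(nk) + a^k) has the same weight c a^k a^(l div n) at l and l + nk
   and no other nonzero weight. *)
Lemma balanced_binomial (c : K) l k : (0 < k)%N -> balanced (c%:P * 'X^l * jgen k).
Proof.
move=> k_gt0; rewrite binomial_expand.
set B := _ + _; pose v := c * a ^+ k * a ^+ (l %/ n).
have hi_neq_lo : (l + n * k != l)%N.
  by rewrite -{2}[l]addn0 eqn_add2l muln_eq0 negb_or -!lt0n hn.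
have hi_mod : (l + n * k = l %[mod n])%N by rewrite addnC mulnC modnMDl.
have w_hi : wcoef B (l + n * k) = v.
  rewrite /wcoef coefD !coef_monomial eqxx (negbTE hi_neq_lo) addr0.
  by rewrite addnC mulnC divnMDl // exprD mulrA.
have w_lo : wcoef B l = v.
  by rewrite /wcoef coefD !coef_monomial eqxx eq_sym (negbTE hi_neq_lo) add0r.
move=> i; have [->|i_hi] := eqVneq i (l + n * k)%N.
  rewrite w_hi => _; exists l; split; first by rewrite eq_sym.
    by rewrite hi_mod.
  by rewrite w_lo /qle add_idem.
have [->|i_lo] := eqVneq i l.
  by rewrite w_lo => _; exists (l + n * k)%N; split; rewrite // w_hi /qle add_idem.
by rewrite /wcoef coefD !coef_monomial (negbTE i_hi) (negbTE i_lo) addr0 mul0r eqxx.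
Qed.

Lemma inJ_balanced (F : {poly K}) : inJ n a F -> balanced F.
Proof.
case=> s [s_pos ->]; rewrite big_seq_cond; apply: balanced_sum => -[k C].
rewrite andbT => /(allP s_pos) /= k_gt0.
rewrite -[C]coefK poly_def mulr_suml; apply: balanced_sum => l _.
by rewrite -mul_polyC; apply: balanced_binomial.
Qed.

(* A monomial of weight zero lies in J: it is c X^(i mod n) times a generator. *)
Lemma inJ_weightless_monomial (c : K) i :
  c * a ^+ (i %/ n) = 0 -> inJ n a (c%:P * 'X^i).
Proof.
have [i_small|q_gt0 cw0] := posnP (i %/ n).
  by rewrite i_small expr0 mulr1 => ->; rewrite polyC0 mul0r; apply: inJ0.
have := inJ_gen (c%:P * 'X^(i %% n)) q_gt0.
by rewrite binomial_expand cw0 polyC0 mul0r addr0 mulnC addnC -divn_eq.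
Qed.

Lemma inJ_binomial_pair (c : K) i j :
  i != j -> (i = j %[mod n])%N -> a ^+ (j %/ n) != 0 ->
  exists2 d, inJ n a (c%:P * 'X^i + d%:P * 'X^j)
           & c * a ^+ (i %/ n) = d * a ^+ (j %/ n).
Proof.
move=> ij ij_mod aj; case: (ltngtP i j) => [lt_ij | lt_ji | eq_ij].
- have [k k_gt0 j_eq] := residue_shift hn lt_ij ij_mod; rewrite {}j_eq in aj *.
  have ak : a ^+ k != 0.
    by apply: contraNneq aj; rewrite addnC mulnC divnMDl // exprD => ->; rewrite mul0r.
  case: hK => _ /(_ _ ak) [y ay]; exists (c * y).
    have := inJ_gen ((c * y)%:P * 'X^i) k_gt0.
    by rewrite binomial_expand -mulrA [y * _]mulrC ay mulr1 addrC.
  by rewrite addnC mulnC divnMDl // exprD mulrA -[c * y * _]mulrA [y * _]mulrC ay mulr1.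
- have [k k_gt0 ->] := residue_shift hn lt_ji (esym ij_mod).
  exists (c * a ^+ k); first by have := inJ_gen (c%:P * 'X^j) k_gt0; rewrite binomial_expand.
  by rewrite addnC mulnC divnMDl // exprD mulrA.
- by rewrite eq_ij eqxx in ij.
Qed.

Lemma monomial_below_inJ (F : {poly K}) i : balanced F ->
  exists B, [/\ inJ n a B, qle ((F`_i)%:P * 'X^i) B & qle B F].
Proof.
move=> bF; have [w0 | wN] := eqVneq (wcoef F i) 0.
  exists ((F`_i)%:P * 'X^i); split; first exact: inJ_weightless_monomial.
    exact: add_idem_poly.
  by apply: qle_monomial; apply: add_idem.
have [j [ji j_mod wij]] := bF i wN.
have aj : a ^+ (j %/ n) != 0.
  by apply: contraNneq (qle_neq0 wij wN) => aj0; rewrite /wcoef aj0 mulr0.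
have ij : i != j by rewrite eq_sym.
have [d B_inJ w_eq] := inJ_binomial_pair (F`_i) ij (esym j_mod) aj.
exists ((F`_i)%:P * 'X^i + d%:P * 'X^j); split=> //.
  exact: qle_addr add_idem_poly _ _.
apply: qle_lub; apply: qle_monomial; first exact: add_idem.
by apply: (qle_cancel aj); rewrite -w_eq.
Qed.

Lemma balanced_inJ (F : {poly K}) : balanced F -> inJ n a F.
Proof.
move=> bF; have below N : exists B,
    [/\ inJ n a B, qle (\sum_(i < N) (F`_i)%:P * 'X^i) B & qle B F].
  elim: N => [|N [B [B_inJ FB BF]]].
    by exists 0; split; rewrite ?big_ord0; [apply: inJ0 | apply: add_idem_poly | apply: qle0x].
  have [B' [B'_inJ FB' B'F]] := monomial_below_inJ N bF.
  exists (B + B'); rewrite big_ord_recr /=; split.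
  - exact: inJD.
  - exact: qle_add.
  - exact: qle_lub.
have [B [B_inJ FB BF]] := below (size F).
have sumF : \sum_(i < size F) (F`_i)%:P * 'X^i = F.
  by rewrite -[RHS]coefK poly_def; apply: eq_bigr => i _; rewrite mul_polyC.
by rewrite sumF in FB; rewrite (qle_anti FB BF).
Qed.

Lemma coef_phi (P : {poly K}) m :
  (phi n a P)`_m = \sum_(i < size P | (i %% n == m)%N) wcoef P i.
Proof.
rewrite /phi coef_sum [RHS]big_mkcond; apply: eq_bigr => i _ /=.
by rewrite coefCM coefXn eq_sym; case: eqP; rewrite ?mulr1 ?mulr0.
Qed.

Lemma phi_dominates (P Q : {poly K}) s : phi n a P = phi n a Q -> wcoef P s != 0 ->
  exists2 s', (s' = s %[mod n])%N & qle (wcoef P s) (wcoef Q s').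
Proof.
move=> phiPQ wPs.
have s_lt : (s < size P)%N.
  by rewrite ltnNge; apply: contraNN wPs => /leq_sizeP P0; rewrite /wcoef P0 ?mul0r.
have : qle (wcoef P s) ((phi n a P)`_(s %% n)%N).
  by rewrite coef_phi (bigD1 (Ordinal s_lt)) //=; apply: qle_addr add_idem _ _.
rewrite phiPQ coef_phi => /qle_sum_split [wPs0 | [i /eqP i_mod wQi]].
  by rewrite wPs0 eqxx in wPs.
by exists i.
Qed.

Lemma wcoefM_term (P U : {poly K}) s t :
  qle (P`_s * U`_t * a ^+ ((s + t) %/ n)) (wcoef (P * U) (s + t)).
Proof.
rewrite /wcoef coefM; apply: qle_mulr.
have s_lt : (s < (s + t).+1)%N by rewrite ltnS leq_addr.
by rewrite (bigD1 (Ordinal s_lt)) //= addKn; apply: qle_addr add_idem _ _.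
Qed.

Lemma wcoefM_split (P U : {poly K}) m x : qle x (wcoef (P * U) m) ->
  x = 0 \/ exists s t, (s + t = m)%N /\ qle x (P`_s * U`_t * a ^+ (m %/ n)).
Proof.
rewrite /wcoef coefM mulr_suml => /qle_sum_split [-> | [w _ xw]]; first by left.
by right; exists (nat_of_ord w), (m - w)%N; rewrite subnKC // -ltnS.
Qed.

Lemma product_weight (P U : {poly K}) s t : P`_s * U`_t * a ^+ ((s + t) %/ n) =
  wcoef P s * wcoef U t * a ^+ (n <= s %% n + t %% n)%N.
Proof. by rewrite /wcoef divnD // !exprD mulrA mulrACA. Qed.

(* Replace P_s by the weight of Q at some s' given by
   phi, and U_t by itself or by its dominating weight at t' <> t: the two
   resulting indices s' + t, s' + t' are distinct, so one differs from i. *)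
Lemma dominated_mul (P Q U : {poly K}) m i x :
  phi n a P = phi n a Q -> balanced U -> x != 0 ->
  qle x (wcoef (P * U) m) -> (m = i %[mod n])%N -> dominated (Q * U) x i.
Proof.
move=> phiPQ bU xN /wcoefM_split [x0 | [s [t [<- xPU]]]]; first by rewrite x0 eqxx in xN.
move=> st_mod; rewrite product_weight in xPU.
have wPs : wcoef P s != 0.
  by apply: contraNneq xN => wPs0; apply/eqP/qlex0; rewrite wPs0 !mul0r in xPU.
have wUt : wcoef U t != 0.
  by apply: contraNneq xN => wUt0; apply/eqP/qlex0; rewrite wUt0 mulr0 mul0r in xPU.
have [s' s'_mod wPQ] := phi_dominates phiPQ wPs.
have [t' [t't t'_mod wUU]] := bU t wUt.
have bound t2 : (t2 = t %[mod n])%N -> qle (wcoef U t) (wcoef U t2) ->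
    qle x (wcoef (Q * U) (s' + t2)) /\ (s' + t2 = i %[mod n])%N.
  move=> t2_mod wUU2; split; last by rewrite -st_mod -modnDm s'_mod t2_mod modnDm.
  apply: qle_trans xPU _; apply: qle_trans (wcoefM_term Q U s' t2).
  rewrite product_weight s'_mod t2_mod; apply: qle_mulr.
  exact: qle_trans (qle_mulr _ wPQ) (qle_mull _ wUU2).
have [xQt st_i] := bound t erefl (add_idem _).
have [xQt' st'_i] := bound t' t'_mod wUU.
have [si | si] := eqVneq (s' + t)%N i.
  by exists (s' + t')%N; split=> //; rewrite -si eqn_add2l.
by exists (s' + t)%N; split.
Qed.

(* The largest weight of QU + V at i comes either from QU, balanced since
   QU lies in J, or from V, in which case it is bounded within the class by
   a weight of PU + V at j <> i, and then by dominated_mul or by V itself. *)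
Lemma balanced_transfer (P Q U V : {poly K}) : phi n a P = phi n a Q -> inJ n a U ->
  balanced (P * U + V) -> balanced (Q * U + V).
Proof.
move=> phiPQ U_inJ bPUV; have bQU := inJ_balanced (inJM Q U_inJ).
move=> i; rewrite [X in dominated _ X]wcoefD wcoefD.
case: (hord (wcoef (Q * U) i) (wcoef V i)) => [QV | VQ]; last first.
  by rewrite addrC VQ => /bQU; apply: dominated_mono => j; apply: wcoef_le_addl.
rewrite QV => wVi; have V_PUV := wcoef_le_addr (P * U) V i.
have [j [ji j_mod]] := dominated_le V_PUV (bPUV i (qle_neq0 V_PUV wVi)).
rewrite wcoefD => /qle_split [xPU | xV].
  have := dominated_mul phiPQ (inJ_balanced U_inJ) wVi xPU j_mod.
  by apply: dominated_mono => k; apply: wcoef_le_addl.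
by exists j; split=> //; apply: qle_trans xV (wcoef_le_addr _ _ _).
Qed.

Lemma inJ_transfer (P Q U V : {poly K}) : phi n a P = phi n a Q -> inJ n a U ->
  inJ n a (P * U + V) -> inJ n a (Q * U + V).
Proof.
move=> phiPQ U_inJ /inJ_balanced bPUV.
exact/balanced_inJ/(balanced_transfer phiPQ U_inJ bPUV).
Qed.

(* For a <> 0, a^-1 F (X^n + a) = a^-1 F X^n + F lies in J above F. *)
Lemma absorbed_by_J (F : {poly K}) : a != 0 -> exists2 W, inJ n a W & qle F W.
Proof.
case: hK => _ /[apply] -[y ay]; exists (y%:P * F * jgen 1); first exact: inJ_gen.
rewrite /jgen mulrDr expr1 [X in _ + X]mulrAC -polyCM [y * a]mulrC ay polyC1 mul1r.
by rewrite /qle addrCA add_idem_poly.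
Qed.

(* For a = 0 the weights vanish from degree n on, so phi(P) = phi(Q) forces
   P and Q to agree below degree n. *)
Lemma low_coef_le (P Q : {poly K}) m : a = 0 -> phi n a P = phi n a Q ->
  (m < n)%N -> qle P`_m Q`_m.
Proof.
move=> a0 phiPQ m_lt; have w_low F : wcoef F m = F`_m.
  by rewrite /wcoef divn_small // expr0 mulr1.
have [Pm0 | PmN] := eqVneq P`_m 0; first by rewrite Pm0; apply: qle0x.
rewrite -!w_low in PmN *; have [s s_mod wPQ] := phi_dominates phiPQ PmN.
have s_lt : (s < n)%N.
  rewrite ltnNge; apply: contraNN (qle_neq0 wPQ PmN) => s_ge.
  by rewrite /wcoef a0 expr0n eqn0Ngt divn_gt0 // s_ge mulr0.
have s_m : s = m by rewrite -(modn_small s_lt) s_mod modn_small.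
by rewrite s_m in wPQ.
Qed.

Lemma translate_zero (P Q : {poly K}) : a = 0 -> phi n a P = phi n a Q ->
  exists2 W, inJ n a W & P + W = Q + W.
Proof.
move=> a0 phiPQ; exists (drop_poly n (P + Q) * jgen 1); first exact: inJ_gen.
have -> : jgen 1 = 'X^n by rewrite /jgen a0 expr1 polyC0 addr0 muln1.
apply/polyP => m; rewrite !coefD coefMXn; case: ltnP => m_n.
  by rewrite !addr0; apply: qle_anti; apply: low_coef_le.
by rewrite coef_drop_poly subnK // coefD addrA add_idem addrCA add_idem.
Qed.

Lemma translate_common (P Q : {poly K}) : phi n a P = phi n a Q ->
  exists U V : {poly K}, inJ n a U /\ inJ n a V /\ P + U = Q + V.
Proof.
move=> phiPQ; suff [W W_inJ PQW] : exists2 W, inJ n a W & P + W = Q + W.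
  by exists W, W.
have [a0 | aN] := eqVneq a 0; first exact: translate_zero.
have [W W_inJ PQ_W] := absorbed_by_J (P + Q) aN; exists W => //.
have P_PQ := qle_addr add_idem_poly P Q; have Q_PQ := qle_addl add_idem_poly P Q.
by rewrite (qle_trans P_PQ PQ_W) (qle_trans Q_PQ PQ_W).
Qed.

End QuasiFieldPolynomials.

Theorem lemma3p5 (K : comNzSemiRingType) (a : K) (n : nat)
  (hK : quasi_field_char1 K) (hord : totally_ordered K) (hn : (1 <= n)%N)
  (P Q : {poly K}) :
  phi n a P = phi n a Q -> congr_mod (inJ n a) P Q.
Proof.
move=> phiPQ; split; first exact: translate_common phiPQ.
move=> U V U_inJ; split; first exact: inJ_transfer phiPQ U_inJ.
exact: inJ_transfer (esym phiPQ) U_inJ.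
Qed.
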